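(* Let $\sigma\ge0$, $\gamma>0$, $V=\sqrt{1+\sigma}$, let $(n^\varepsilon,u^\varepsilon,\phi^\varepsilon)$ be the solitary wave solution, and set $\widetilde N_\varepsilon(\xi)=\frac{n^\varepsilon(\xi)-1}{\varepsilon}$, $\widetilde E_\varepsilon(\xi)=\frac{-(\phi^\varepsilon)'(\xi)}{\varepsilon}$, and $h(n)=\frac{(V+\gamma\varepsilon)^2}{n^3}-\frac{\sigma}{n}$. There exist positive constants $\varepsilon_0$, $C$, $\delta_0$, independent of $\varepsilon$ and $\xi$, such that: (1) for all $0<\varepsilon<\varepsilon_0$, \[ \widetilde N_\varepsilon(0)>2\gamma V^{-1},\quad 4\gamma^2>\widetilde E_\varepsilon'(0)>2\gamma^2,\quad \tfrac12<\sup_{\xi\in\mathbb{R}}h(n^\varepsilon(\xi))<\tfrac32, \] \[ \sup_{\xi\in\mathbb{R}}\big(|\widetilde N_\varepsilon'(\xi)|+|\widetilde E_\varepsilon(\xi)|+|\widetilde E_\varepsilon''(\xi)|\big)\le C; \] (2) if $0<\delta<\delta_0$ ($\delta$ independent of $\varepsilon$ and $\xi$), then for all $0<\varepsilon<\varepsilon_0$ and every $\xi$ at which $\widetilde N_\varepsilon(\xi)\le\delta$, one has $|\widetilde E_\varepsilon(\xi)|>\sqrt\gamma\,\widetilde N_\varepsilon(\xi)$.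
   Context: For $\varepsilon>0$, consider the system in $\xi\in\mathbb{R}$: $-(V+\gamma\varepsilon)n'+(nu)'=0$, $-(V+\gamma\varepsilon)u'+uu'+\sigma n'/n=-\phi'$, $\varepsilon\phi''=e^\phi-n$, with $n\to1,u\to0,\phi\to0$ as $|\xi|\to\infty$. With $V=\sqrt{1+\sigma}$, for all sufficiently small $\varepsilon>0$ it has a non-trivial smooth solution unique up to translation; the ''solitary wave solution'' $(n^\varepsilon,u^\varepsilon,\phi^\varepsilon)$ is the translate that is even in $\xi$ and has all components strictly decreasing on $(0,\infty)$ (so $n^\varepsilon>1$, $\widetilde N_\varepsilon>0$ on $\mathbb{R}$ and $\widetilde E_\varepsilon\ge0$ on $[0,\infty)$). *)

From Stdlib Require Import Reals.
From Coquelicot Require Import Coquelicot.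
Open Scope R_scope.

Definition smooth (f : R -> R) : Prop :=
  forall (k : nat) (x : R), ex_derive_n f k x.

Definition Vspeed (sigma : R) : R := sqrt (1 + sigma).

Definition tw_solution (sigma gamma eps : R) (n u phi : R -> R) : Prop :=
  let c := Vspeed sigma + gamma * eps in
  smooth n /\ smooth u /\ smooth phi /\
  (forall x, 0 < n x) /\
  (forall x, - c * Derive n x + Derive (fun y => n y * u y) x = 0) /\
  (forall x, - c * Derive u x + u x * Derive u x + sigma * Derive n x / n x
             = - Derive phi x) /\
  (forall x, eps * Derive_n phi 2 x = exp (phi x) - n x) /\
  is_lim n p_infty 1 /\ is_lim n m_infty 1 /\
  is_lim u p_infty 0 /\ is_lim u m_infty 0 /\
  is_lim phi p_infty 0 /\ is_lim phi m_infty 0.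

Definition is_even (f : R -> R) : Prop := forall x, f (- x) = f x.

Definition strict_decr_pos (f : R -> R) : Prop :=
  forall x y, 0 < x -> x < y -> f y < f x.

Definition solitary_wave (sigma gamma eps : R) (n u phi : R -> R) : Prop :=
  tw_solution sigma gamma eps n u phi /\
  (exists x, n x <> 1 \/ u x <> 0 \/ phi x <> 0) /\
  is_even n /\ is_even u /\ is_even phi /\
  strict_decr_pos n /\ strict_decr_pos u /\ strict_decr_pos phi.

Definition Ntilde (eps : R) (n : R -> R) (x : R) : R := (n x - 1) / eps.
Definition Etilde (eps : R) (phi : R -> R) (x : R) : R := - Derive phi x / eps.
Definition hfun (sigma gamma eps nn : R) : R :=
  (Vspeed sigma + gamma * eps) ^ 2 / nn ^ 3 - sigma / nn.

From Stdlib Require Import Reals Lra Psatz.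
From Coquelicot Require Import Coquelicot.
Open Scope R_scope.

(* Integrating the travelling-wave system once gives [u = c - c/n] and [phi = pot c s n], hence
   [phi' = h(n) n'] with [h = dpot c s]; multiplying the Poisson equation by [phi'] gives the
   Sagdeev first integral [eps phi'^2 / 2 = sagdeev c s n]. Writing [n = 1 + m] and
   [a = c^2 - 1 - s = 2 V g eps + g^2 eps^2], one has
   [sagdeev c s (1+m) = a m^2/2 - (1+s) m^3/3 + O(eps^2 m^2)] for [0 <= m = O(eps)].
   Since [phi'(0) = 0], the crest amplitude [n(0) - 1] is the positive zero of [sagdeev], which lies
   within 5% of [3 g eps / V]. The bounds of the statement are read off from this expansion,
   together with [h(n) = 1 + O(eps)] and [pot c s n = O(eps)]. *)

(** * Elementary calculus facts *)

Lemma continuity_pt_of_ex_derive (f : R -> R) (x : R) :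
  ex_derive f x -> continuity_pt f x.
Proof.
  intros Hf. apply continuity_pt_filterlim.
  exact (@ex_derive_continuous R_AbsRing R_NormedModule f x Hf).
Qed.

Lemma nonneg_of_derive_nonneg (f df : R -> R) (t : R) : 0 <= t ->
  (forall x, 0 <= x <= t -> is_derive f x (df x)) ->
  (forall x, 0 <= x <= t -> 0 <= df x) -> f 0 = 0 -> 0 <= f t.
Proof.
  intros Ht Hd Hpos H0.
  destruct (MVT_gen f 0 t df) as [x [Hx Hmvt]];
    rewrite ?Rmin_left, ?Rmax_right in * by lra.
  - intros x Hx. apply Hd. lra.
  - intros x Hx. apply continuity_pt_of_ex_derive. exists (df x). apply Hd. lra.
  - assert (0 <= df x * (t - 0)) by (apply Rmult_le_pos; [apply Hpos|]; lra).
    lra.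
Qed.

Lemma const_of_derive_zero (f : R -> R) :
  (forall x, is_derive f x 0) -> forall x y, f x = f y.
Proof.
  intros Hd x y.
  destruct (MVT_gen f x y (fun _ => 0)) as [z [_ Hmvt]].
  - intros z _. apply Hd.
  - intros z _. apply continuity_pt_of_ex_derive. exists 0. apply Hd.
  - lra.
Qed.

Lemma const_eq_lim (f : R -> R) (x : Rbar) (l : R) :
  (forall y z, f y = f z) -> is_lim f x l -> forall y, f y = l.
Proof.
  intros Hc Hl y.
  assert (Hy : is_lim f x (f y)).
  { apply (is_lim_ext (fun _ => f y)); [intros z; apply Hc | apply is_lim_const]. }
  apply is_lim_unique in Hl. apply is_lim_unique in Hy.
  rewrite Hy in Hl. now injection Hl.
Qed.

Lemma exp_le_compat (x y : R) : x <= y -> exp x <= exp y.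
Proof. intros [Hxy | ->]; [apply Rlt_le, exp_increasing, Hxy | lra]. Qed.

Lemma exp_ge_taylor2 (t : R) : 0 <= t -> 1 + t + t^2/2 <= exp t.
Proof.
  intros Ht.
  enough (0 <= exp t - 1 - t - t^2/2) by lra.
  apply (nonneg_of_derive_nonneg (fun x => exp x - 1 - x - x^2/2) (fun x => exp x - 1 - x));
    [lra | | | ].
  - intros x _. auto_derive; [exact I | field].
  - intros x _. pose proof (exp_ineq1_le x). lra.
  - rewrite exp_0. field.
Qed.

(* [Hthird], [Hsecond], [Hfirst] are the successive derivatives of the claim; each is obtained by
   integrating the previous one from 0, starting from [exp 1 <= 3]. *)
Lemma exp_le_taylor3 (t : R) : 0 <= t <= 1 -> exp t <= 1 + t + t^2/2 + t^3.
Proof.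
  intros Ht.
  assert (Hthird : forall x, 0 <= x <= 1 -> 0 <= 6 - exp x).
  { intros x Hx. pose proof exp_le_3.
    assert (exp x <= exp 1) by (apply exp_le_compat; lra). lra. }
  assert (Hsecond : forall y, 0 <= y <= 1 -> 0 <= 1 + 6*y - exp y).
  { intros y Hy.
    apply (nonneg_of_derive_nonneg (fun x => 1 + 6*x - exp x) (fun x => 6 - exp x)); try lra.
    - intros x _. auto_derive; [exact I | field].
    - intros x Hx. apply Hthird. lra.
    - rewrite exp_0. lra. }
  assert (Hfirst : forall y, 0 <= y <= 1 -> 0 <= 1 + y + 3*y^2 - exp y).
  { intros y Hy.
    apply (nonneg_of_derive_nonneg (fun x => 1 + x + 3*x^2 - exp x) (fun x => 1 + 6*x - exp x));
      try lra.
    - intros x _. auto_derive; [exact I | field].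
    - intros x Hx. apply Hsecond. lra.
    - rewrite exp_0. lra. }
  enough (0 <= 1 + t + t^2/2 + t^3 - exp t) by lra.
  apply (nonneg_of_derive_nonneg (fun x => 1 + x + x^2/2 + x^3 - exp x)
           (fun x => 1 + x + 3*x^2 - exp x)); try lra.
  - intros x _. auto_derive; [exact I | field].
  - intros x Hx. apply Hfirst. lra.
  - rewrite exp_0. lra.
Qed.

Lemma ln_1p_bounds (m : R) : 0 <= m -> m - m^2/2 <= ln (1+m) <= m - m^2/2 + m^3/3.
Proof.
  intros Hm. split.
  - enough (0 <= ln (1+m) - (m - m^2/2)) by lra.
    apply (nonneg_of_derive_nonneg (fun x => ln (1+x) - (x - x^2/2)) (fun x => x^2/(1+x)));
      [lra | | | ].
    + intros x Hx. auto_derive; [lra | field; lra].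
    + intros x Hx. apply Rdiv_le_0_compat; nra.
    + rewrite Rplus_0_r, ln_1. field.
  - enough (0 <= (m - m^2/2 + m^3/3) - ln (1+m)) by lra.
    apply (nonneg_of_derive_nonneg (fun x => (x - x^2/2 + x^3/3) - ln (1+x))
             (fun x => x^3/(1+x))); [lra | | | ].
    + intros x Hx. auto_derive; [lra | field; lra].
    + intros x Hx. apply Rdiv_le_0_compat; nra.
    + rewrite Rplus_0_r, ln_1. field.
Qed.

Lemma inv_1p_sqr_bounds (m : R) : 0 <= m ->
  1 - 2*m + 3*m^2 - 4*m^3 <= 1/(1+m)^2 <= 1 - 2*m + 3*m^2.
Proof.
  intros Hm.
  assert (Hpos : 0 < (1+m)^2) by (apply pow_lt; lra).
  assert (0 <= m^3) by (apply pow_le; lra).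
  assert (0 <= m^4) by (apply pow_le; lra).
  assert (0 <= m^5) by (apply pow_le; lra).
  split; apply (Rmult_le_reg_l ((1+m)^2)); auto;
    replace ((1+m)^2 * (1/(1+m)^2)) with 1 by (field; lra); nra.
Qed.

Lemma inv_1p_cube_ge (m : R) : 0 <= m -> 1 - 3*m <= 1/(1+m)^3.
Proof.
  intros Hm.
  assert (Hpos : 0 < (1+m)^3) by (apply pow_lt; lra).
  assert (0 <= m^3) by (apply pow_le; lra).
  assert (0 <= m^4) by (apply pow_le; lra).
  apply (Rmult_le_reg_l ((1+m)^3)); auto.
  replace ((1+m)^3 * (1/(1+m)^3)) with 1 by (field; lra). nra.
Qed.

Lemma abs_le_1_plus_sqr (y : R) : Rabs y <= 1 + y^2.
Proof. rewrite <- pow2_abs. pose proof (pow2_ge_0 (Rabs y - 1/2)). nra. Qed.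

Lemma eq0_of_abs_le_linear (z B : R) : 0 <= B ->
  (forall eta, 0 < eta <= 1 -> Rabs z <= B * eta) -> z = 0.
Proof.
  intros HB Hz. destruct (Req_dec z 0) as [|Hnz]; auto. exfalso.
  pose proof (Rabs_pos_lt z Hnz) as Hpos.
  set (eta := Rmin 1 (Rabs z / (2 * (B + 1)))).
  assert (Heta : 0 < eta) by (apply Rmin_pos; [lra | apply Rdiv_lt_0_compat; lra]).
  assert (Heta_z : eta <= Rabs z / (2 * (B + 1))) by apply Rmin_r.
  specialize (Hz eta (conj Heta (Rmin_l _ _))).
  assert (B * eta <= (B + 1) * (Rabs z / (2 * (B + 1)))) by (apply Rmult_le_compat; lra).
  replace ((B + 1) * (Rabs z / (2 * (B + 1)))) with (Rabs z / 2) in * by (field; lra).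
  lra.
Qed.

Lemma eventually_close_at_infty (f : R -> R) (l eta : R) : is_lim f p_infty l -> 0 < eta ->
  exists M, forall y, M < y -> Rabs (f y - l) < eta.
Proof.
  intros Hf Heta. apply is_lim_spec in Hf.
  exact (Hf (mkposreal eta Heta)).
Qed.

Lemma exists_small_Derive_far (f : R -> R) (l : R) :
  (forall x, ex_derive f x) -> is_lim f p_infty l ->
  forall eta M, 0 < eta -> exists x, M < x /\ Rabs (Derive f x) < eta.
Proof.
  intros Hd Hf eta M Heta.
  destruct (eventually_close_at_infty f l (eta / 2) Hf) as [M1 HM1]; [lra |].
  set (X := Rmax M M1 + 1).
  assert (HX : M < X /\ M1 < X)
    by (split; unfold X; [pose proof (Rmax_l M M1) | pose proof (Rmax_r M M1)]; lra).
  destruct (MVT_gen f X (X + 1) (Derive f)) as [x [Hx Hmvt]];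
    rewrite ?Rmin_left, ?Rmax_right in * by lra.
  - intros y _. apply Derive_correct, Hd.
  - intros y _. apply continuity_pt_of_ex_derive, Hd.
  - exists x. split; [lra |].
    replace (Derive f x) with (f (X + 1) - f X) by (rewrite Hmvt; ring).
    pose proof (HM1 X ltac:(lra)). pose proof (HM1 (X + 1) ltac:(lra)).
    replace (f (X + 1) - f X) with ((f (X + 1) - l) - (f X - l)) by ring.
    eapply Rle_lt_trans; [apply Rabs_triang | rewrite Rabs_Ropp; lra].
Qed.

Lemma Derive_even_0 (f : R -> R) : is_even f -> ex_derive f 0 -> Derive f 0 = 0.
Proof.
  intros Hev Hd.
  assert (Hopp : is_derive (fun x => f (- x)) 0 (- Derive f 0)).
  { replace (- Derive f 0) with (-1 * Derive f 0) by ring.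
    apply (is_derive_comp f (fun x => - x)).
    - rewrite Ropp_0. now apply Derive_correct.
    - auto_derive; [exact I | field]. }
  apply (is_derive_ext _ f) in Hopp; [| intros t; apply Hev].
  apply is_derive_unique in Hopp. lra.
Qed.

Lemma even_decr_profile (f : R -> R) (l : R) :
  continuity_pt f 0 -> is_even f -> strict_decr_pos f -> is_lim f p_infty l ->
  (forall x, l < f x) /\ (forall x, f x <= f 0).
Proof.
  intros Hc Hev Hdecr Hl.
  assert (Hge : forall y, 0 < y -> l <= f y).
  { intros y Hy. destruct (Rle_dec l (f y)) as [| Hlt]; auto. exfalso.
    destruct (eventually_close_at_infty f l (l - f y) Hl) as [M HM]; [lra |].
    set (z := Rmax M y + 1).
    assert (M < z /\ y < z)
      by (split; unfold z; [pose proof (Rmax_l M y) | pose proof (Rmax_r M y)]; lra).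
    specialize (HM z ltac:(lra)). specialize (Hdecr y z Hy ltac:(lra)).
    apply Rabs_def2 in HM. lra. }
  assert (Hgt : forall y, 0 < y -> l < f y).
  { intros y Hy. specialize (Hge (y + 1) ltac:(lra)). specialize (Hdecr y (y + 1) Hy ltac:(lra)).
    lra. }
  assert (Hle0 : forall y, 0 < y -> f y <= f 0).
  { intros y Hy. destruct (Rle_dec (f y) (f 0)) as [| Hlt]; auto. exfalso.
    destruct (Hc (f y - f 0)) as [d [Hd Hnear]]; [lra |].
    set (z := Rmin (d / 2) (y / 2)).
    assert (0 < z /\ z <= d / 2 /\ z <= y / 2)
      by (unfold z; repeat split; [apply Rmin_pos | apply Rmin_l | apply Rmin_r]; lra).
    specialize (Hnear z). specialize (Hdecr z y ltac:(lra) ltac:(lra)).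
    simpl in Hnear. unfold R_dist in Hnear.
    assert (Hz : Rabs (f z - f 0) < f y - f 0).
    { apply Hnear. split; [split; [exact I | lra] | rewrite Rminus_0_r, Rabs_right; lra]. }
    apply Rabs_def2 in Hz. lra. }
  split; intros x; destruct (Rtotal_order x 0) as [Hx | [-> | Hx]].
  - rewrite <- Hev. apply Hgt. lra.
  - specialize (Hgt 1 Rlt_0_1). specialize (Hle0 1 Rlt_0_1). lra.
  - apply Hgt. lra.
  - rewrite <- Hev. apply Hle0. lra.
  - lra.
  - apply Hle0. lra.
Qed.

Lemma exists_preimage_below_max (f : R -> R) (l y : R) :
  continuity f -> is_lim f p_infty l -> l < y <= f 0 -> exists x, f x = y.
Proof.
  intros Hc Hl Hy.
  destruct (eventually_close_at_infty f l (y - l) Hl) as [M HM]; [lra |].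
  set (X := Rmax M 0 + 1).
  assert (M < X /\ 0 < X)
    by (split; unfold X; [pose proof (Rmax_l M 0) | pose proof (Rmax_r M 0)]; lra).
  specialize (HM X ltac:(lra)). apply Rabs_def2 in HM.
  destruct (IVT_gen f 0 X y Hc) as [x [_ Hx]].
  - rewrite Rmin_right, Rmax_left by lra. lra.
  - now exists x.
Qed.

Lemma abs_le_of_derive_abs_le (f df : R -> R) (K t : R) : 0 <= t -> f 0 = 0 ->
  (forall x, 0 <= x <= t -> is_derive f x (df x)) ->
  (forall x, 0 <= x <= t -> Rabs (df x) <= K * x) ->
  Rabs (f t) <= K * t^2 / 2.
Proof.
  intros Ht H0 Hd Hdf.
  assert (Hside : forall sg, sg = 1 \/ sg = -1 -> 0 <= K * t^2 / 2 - sg * f t).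
  { intros sg Hsg.
    apply (nonneg_of_derive_nonneg (fun x => K * x^2 / 2 - sg * f x) (fun x => K * x - sg * df x));
      [exact Ht | | | rewrite H0; field].
    - intros x Hx.
      apply (is_derive_ext (fun y => K * y^2 / 2 + (- sg) * f y)); [intros y; lra |].
      replace (K * x - sg * df x) with (K * x + (- sg) * df x) by ring.
      apply (is_derive_plus (fun y => K * y^2 / 2) (fun y => (- sg) * f y)).
      + auto_derive; [exact I | field].
      + apply is_derive_scal, Hd, Hx.
    - intros x Hx. specialize (Hdf x Hx). apply Rabs_le_between in Hdf.
      destruct Hsg as [-> | ->]; lra. }
  pose proof (Hside 1 (or_introl eq_refl)). pose proof (Hside (-1) (or_intror eq_refl)).
  apply Rabs_le. lra.
Qed.

(** * Reduction of the travelling-wave system *)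

(* [pot c s n] is [phi] as a function of [n] along a wave of speed [c]
   (so [phi' = dpot c s n * n']), and [sagdeev c s n] is the Sagdeev potential:
   [eps * phi'^2 / 2 = sagdeev c s n]. *)
Definition pot (c s n : R) : R := c^2/2 * (1 - 1/n^2) - s * ln n.
Definition dpot (c s n : R) : R := c^2/n^3 - s/n.
Definition sagdeev (c s n : R) : R := exp (pot c s n) - 1 - (c^2 * (1 - 1/n) - s * (n - 1)).

Lemma pot_1 (c s : R) : pot c s 1 = 0.
Proof. unfold pot. rewrite ln_1. field. Qed.

Lemma sagdeev_1 (c s : R) : sagdeev c s 1 = 0.
Proof. unfold sagdeev. rewrite pot_1, exp_0. field. Qed.

Lemma is_derive_pot (c s y : R) : 0 < y -> is_derive (pot c s) y (dpot c s y).
Proof.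
  intros Hy. unfold pot, dpot. auto_derive.
  - repeat split; try lra; apply Rgt_not_eq; nra.
  - field. lra.
Qed.

Lemma is_derive_sagdeev (c s y : R) : 0 < y ->
  is_derive (sagdeev c s) y (dpot c s y * (exp (pot c s y) - y)).
Proof.
  intros Hy.
  assert (Hexp : is_derive (fun z => exp (pot c s z)) y (dpot c s y * exp (pot c s y))).
  { apply (is_derive_comp exp (pot c s)); [apply is_derive_exp | apply is_derive_pot, Hy]. }
  assert (Hpoly : is_derive (fun z => 1 + (c^2 * (1 - 1/z) - s * (z - 1))) y (y * dpot c s y)).
  { unfold dpot. auto_derive; [apply Rgt_not_eq; lra | field; lra]. }
  replace (dpot c s y * (exp (pot c s y) - y))
    with (dpot c s y * exp (pot c s y) - y * dpot c s y) by ring.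
  apply (is_derive_ext (fun z => exp (pot c s z) - (1 + (c^2 * (1 - 1/z) - s * (z - 1))))).
  - intros z. unfold sagdeev. lra.
  - exact (is_derive_minus _ _ _ _ _ Hexp Hpoly).
Qed.

Lemma continuous_pot (c s y : R) : 0 < y -> continuous (pot c s) y.
Proof.
  intros Hy. apply (@ex_derive_continuous R_AbsRing R_NormedModule).
  eexists. now apply is_derive_pot.
Qed.

Lemma continuous_sagdeev (c s y : R) : 0 < y -> continuous (sagdeev c s) y.
Proof.
  intros Hy. apply (@ex_derive_continuous R_AbsRing R_NormedModule).
  eexists. now apply is_derive_sagdeev.
Qed.

Section TravellingWave.

Variables (s c e : R) (n u phi : R -> R).

Hypothesis n_pos : forall x, 0 < n x.
Hypothesis n_diff : forall x, ex_derive n x.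
Hypothesis u_diff : forall x, ex_derive u x.
Hypothesis phi_diff : forall x, ex_derive phi x.
Hypothesis phi_diff2 : forall x, ex_derive (Derive phi) x.
Hypothesis mass_eq : forall x, - c * Derive n x + Derive (fun y => n y * u y) x = 0.
Hypothesis momentum_eq : forall x,
  - c * Derive u x + u x * Derive u x + s * Derive n x / n x = - Derive phi x.
Hypothesis poisson_eq : forall x, e * Derive_n phi 2 x = exp (phi x) - n x.
Hypothesis n_lim : is_lim n p_infty 1.
Hypothesis u_lim : is_lim u p_infty 0.
Hypothesis phi_lim : is_lim phi p_infty 0.

Lemma mass_flux (x : R) : n x * u x - c * n x = - c.
Proof.
  apply (const_eq_lim (fun y => n y * u y - c * n y) p_infty).
  - apply const_of_derive_zero. intros y.
    specialize (mass_eq y). rewrite Derive_mult in mass_eq by auto.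
    auto_derive; [repeat split; auto |].
    change (fun x : R => n x) with n; change (fun x : R => u x) with u. lra.
  - replace (- c) with (1 * 0 - c * 1) by ring.
    apply is_lim_minus';
      [apply (is_lim_mult n u p_infty 1 0) | apply (is_lim_scal_l n c p_infty 1)]; auto; exact I.
Qed.

Lemma u_of_n (x : R) : u x = c - c / n x.
Proof.
  pose proof (mass_flux x). pose proof (n_pos x).
  apply (Rmult_eq_reg_l (n x)); [| lra]. field_simplify; lra.
Qed.

Lemma Derive_phi_of_n (x : R) : Derive phi x = dpot c s (n x) * Derive n x.
Proof.
  pose proof (n_pos x) as Hn.
  assert (Hu' : Derive u x = c * Derive n x / n x ^ 2).
  { rewrite (Derive_ext u (fun y => c - c / n y) x u_of_n).
    apply is_derive_unique. auto_derive; [repeat split; auto; lra |].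
    change (fun x : R => n x) with n. field. lra. }
  specialize (momentum_eq x). rewrite Hu', u_of_n in momentum_eq.
  apply Ropp_eq_compat in momentum_eq. rewrite Ropp_involutive in momentum_eq.
  rewrite <- momentum_eq. unfold dpot. field. lra.
Qed.

Lemma phi_of_n (x : R) : phi x = pot c s (n x).
Proof.
  enough (phi x - pot c s (n x) = 0) by lra.
  apply (const_eq_lim (fun y => phi y - pot c s (n y)) p_infty).
  - apply const_of_derive_zero. intros y.
    replace 0 with (Derive phi y - Derive n y * dpot c s (n y))
      by (rewrite Derive_phi_of_n; ring).
    apply (is_derive_minus phi (fun z => pot c s (n z))).
    + now apply Derive_correct.
    + apply (is_derive_comp (pot c s) n); [apply is_derive_pot, n_pos | now apply Derive_correct].
  - pose proof (is_lim_comp_continuous n (pot c s) p_infty 1 n_lim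
                  (continuous_pot c s 1 Rlt_0_1)) as Hpot.
    rewrite pot_1 in Hpot.
    replace (Finite 0) with (Finite (0 - 0)) by (f_equal; ring).
    exact (is_lim_minus' _ _ _ _ _ phi_lim Hpot).
Qed.

Lemma sagdeev_first_integral (x : R) : e * (Derive phi x)^2 / 2 = sagdeev c s (n x).
Proof.
  set (w := fun y => e * (Derive phi y)^2 / 2 - sagdeev c s (n y)).
  enough (w x = 0) by (unfold w in *; lra).
  assert (Hconst : forall y z, w y = w z).
  { apply const_of_derive_zero. intros y.
    assert (Hphi2 : e * Derive (Derive phi) y = exp (phi y) - n y) by exact (poisson_eq y).
    replace 0 with (e * Derive phi y * Derive (Derive phi) y
                    - Derive n y * (dpot c s (n y) * (exp (pot c s (n y)) - n y)))
      by (rewrite <- phi_of_n;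
          replace (e * Derive phi y * Derive (Derive phi) y)
            with (Derive phi y * (e * Derive (Derive phi) y)) by ring;
          rewrite Hphi2, Derive_phi_of_n; ring).
    apply (is_derive_minus (fun z => e * (Derive phi z)^2 / 2) (fun z => sagdeev c s (n z))).
    - auto_derive; [exact (phi_diff2 y) |].
      change (fun x : R => Derive phi x) with (Derive phi). field.
    - apply (is_derive_comp (sagdeev c s) n);
        [apply is_derive_sagdeev, n_pos | now apply Derive_correct]. }
  apply (eq0_of_abs_le_linear _ (Rabs e / 2 + 1)); [pose proof (Rabs_pos e); lra |].
  intros eta Heta.
  pose proof (is_lim_comp_continuous n (sagdeev c s) p_infty 1 n_lim
                (continuous_sagdeev c s 1 Rlt_0_1)) as Hsag.
  rewrite sagdeev_1 in Hsag.
  destruct (eventually_close_at_infty _ _ eta Hsag) as [M HM]; [lra |].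
  destruct (exists_small_Derive_far phi 0 phi_diff phi_lim eta M) as [y [HMy Hy]]; [lra |].
  rewrite (Hconst x y). unfold w.
  specialize (HM y HMy). rewrite Rminus_0_r in HM.
  assert (Hsq : (Derive phi y)^2 <= eta) by (apply Rabs_lt_between in Hy; nra).
  assert (Hkin : Rabs (e * (Derive phi y)^2 / 2) <= Rabs e / 2 * eta).
  { replace (e * (Derive phi y)^2 / 2) with (e * ((Derive phi y)^2 / 2)) by field.
    rewrite Rabs_mult, (Rabs_right ((Derive phi y)^2 / 2)) by nra.
    pose proof (Rabs_pos e). nra. }
  eapply Rle_trans; [apply Rabs_triang | rewrite Rabs_Ropp; lra].
Qed.

End TravellingWave.

(** * The Sagdeev potential near [n = 1] *)

(* Third-order Taylor brackets of [pot c s (1+m)], written with [c^2 = 1 + a + s]. *)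
Definition pot_lower (a s m : R) : R := (1+a)*m - (3*(1+a)/2 + s)*m^2 - s*m^3/3.
Definition pot_upper (a s m : R) : R := (1+a)*m - (3*(1+a)/2 + s)*m^2 + 2*(1+a+s)*m^3.

Lemma pot_1p_bounds (c s a m : R) : 0 <= s -> c^2 = 1 + a + s -> 0 <= m ->
  pot_lower a s m <= pot c s (1+m) <= pot_upper a s m.
Proof.
  intros Hs Hc Hm. unfold pot, pot_lower, pot_upper.
  destruct (inv_1p_sqr_bounds m Hm) as [R1 R2].
  destruct (ln_1p_bounds m Hm) as [L1 L2].
  assert (Hc0 : 0 <= c^2) by apply pow2_ge_0.
  assert (c^2/2 * (1 - 1/(1+m)^2) >= c^2/2 * (1 - (1 - 2*m + 3*m^2)))
    by (apply Rle_ge, Rmult_le_compat_l; lra).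
  assert (c^2/2 * (1 - 1/(1+m)^2) <= c^2/2 * (1 - (1 - 2*m + 3*m^2 - 4*m^3)))
    by (apply Rmult_le_compat_l; lra).
  assert (s * ln (1+m) <= s * (m - m^2/2 + m^3/3)) by (apply Rmult_le_compat_l; lra).
  assert (s * ln (1+m) >= s * (m - m^2/2)) by (apply Rle_ge, Rmult_le_compat_l; lra).
  rewrite Hc in *. split; nra.
Qed.

Lemma dpot_1p_bounds (c s m : R) : 0 <= s -> s <= c^2 -> 0 <= m <= 1 ->
  c^2 - s - 3*c^2*m <= dpot c s (1+m) <= c^2 - s.
Proof.
  intros Hs Hsc Hm. unfold dpot.
  assert (Hc0 : 0 <= c^2) by apply pow2_ge_0.
  pose proof (inv_1p_cube_ge m (proj1 Hm)) as I3.
  set (q := /(1+m)).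
  assert (Hq : q * (1+m) = 1) by (unfold q; field; lra).
  assert (Hq0 : 0 < q) by (unfold q; apply Rinv_0_lt_compat; lra).
  assert (Hq1 : q <= 1) by nra.
  replace (c^2/(1+m)^3) with (c^2 * q^3) by (unfold q; field; lra).
  replace (1/(1+m)^3) with (q^3) in I3 by (unfold q; field; lra).
  replace (s/(1+m)) with (s*q) by (unfold q; field; lra).
  split.
  - assert (c^2 * q^3 >= c^2 * (1 - 3*m)) by (apply Rle_ge, Rmult_le_compat_l; lra).
    assert (s*q <= s) by nra. lra.
  - assert (0 <= (1-q)*(c^2*(1+q+q^2) - s)) by (apply Rmult_le_pos; nra).
    nra.
Qed.

Section NearOne.

Variables (L e m a s c : R).

Hypothesis L_ge1 : 1 <= L.
Hypothesis e_pos : 0 < e.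
Hypothesis e_small : 48 * L^3 * e <= 1.
Hypothesis m_range : 0 <= m <= 4*L*e.
Hypothesis a_range : 0 <= a <= 3*L^2*e.
Hypothesis s_nonneg : 0 <= s.
Hypothesis c_sqr : c^2 = 1 + a + s.
Hypothesis c_sqr_le : 1 + a + s <= L^2.

Lemma m_le_twelfth : m <= 1/12.
Proof.
  assert (1 <= L^2) by (apply pow_R1_Rle; lra).
  assert (m * L^2 <= 4*L*e*L^2) by (apply Rmult_le_compat_r; lra). nra.
Qed.

Lemma m_cube_le : m^3 <= 16 * L^2 * e^2 * m.
Proof.
  assert (m*m <= (4*L*e)*(4*L*e)) by (apply Rmult_le_compat; lra).
  replace (m^3) with (m^2*m) by ring. apply Rmult_le_compat_r; lra.
Qed.

Lemma pot_brackets_bounds :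
  0 <= pot_lower a s m /\ pot_upper a s m <= 3 * L^2 * m.
Proof.
  pose proof m_le_twelfth.
  assert (L2 : 1 <= L^2) by (apply pow_R1_Rle; lra).
  assert (Hm1 : m * L^2 <= 1/12).
  { assert (m * L^2 <= 4*L*e*L^2) by (apply Rmult_le_compat_r; lra). nra. }
  assert (Hbm : (3*(1+a)/2 + s) * m <= 1/8) by nra.
  unfold pot_lower, pot_upper. split.
  - assert ((3*(1+a)/2 + s)*m^2 <= m/8) by nra.
    assert (Hsm : s * m <= 1/12) by nra.
    assert (m^2 <= 1) by nra.
    assert (s*m^3/3 <= m/8) by nra. nra.
  - assert ((1+a+s)*m^2 <= L^2 * 1) by (apply Rmult_le_compat; nra).
    assert (0 <= (3*(1+a)/2 + s)*m^2) by nra. nra.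
Qed.

Lemma pot_1p_range : 0 <= pot c s (1+m) <= 3 * L^2 * m.
Proof.
  destruct (pot_1p_bounds c s a m s_nonneg c_sqr (proj1 m_range)).
  destruct pot_brackets_bounds. lra.
Qed.

Lemma pot_lower_taylor2_ge :
  - (1000 * L^8 * e^2 * m) <= pot_lower a s m + (pot_lower a s m)^2/2 - m - (a*m - (1+s)*m^2).
Proof.
  pose proof m_le_twelfth. pose proof m_cube_le.
  set (b := 3*(1+a)/2 + s). set (Flo := pot_lower a s m).
  assert (0 <= m^3) by (apply pow_le; lra).
  assert (Y : 0 <= b*m^2 + s*m^3/3) by (unfold b; nra).
  assert (Q : Flo^2 >= (1+a)^2*m^2 - 2*(1+a)*m*(b*m^2 + s*m^3/3))
    by (unfold Flo, pot_lower; fold b; nra).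
  assert (Id : Flo + ((1+a)^2*m^2 - 2*(1+a)*m*(b*m^2 + s*m^3/3))/2 - m - (a*m - (1+s)*m^2)
               = (a^2/2 - a/2)*m^2 - (s/3 + (1+a)*b)*m^3 - (1+a)*s*m^4/3)
    by (unfold Flo, pot_lower, b; field).
  assert (K3 : s/3 + (1+a)*b + (1+a)*s/3 <= 3 * L^4).
  { assert ((1+a)*b <= L^2 * (3/2*L^2)) by (apply Rmult_le_compat; unfold b; lra).
    assert ((1+a)*s <= L^2 * L^2) by (apply Rmult_le_compat; lra). nra. }
  assert (P4 : (1+a)*s*m^4/3 <= (1+a)*s*m^3/3).
  { assert (m^4 <= m^3) by (replace (m^4) with (m^3*m) by ring; nra).
    assert (0 <= (1+a)*s) by nra. nra. }
  assert (K3m : (s/3 + (1+a)*b + (1+a)*s/3) * m^3 <= 3*L^4 * (16 * L^2 * e^2 * m)).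
  { apply Rmult_le_compat; try lra.
    assert (0 <= (1+a)*b) by (unfold b; nra). assert (0 <= (1+a)*s) by nra. lra. }
  assert (L6 : L^6 <= L^8) by (apply Rle_pow; [lra | lia]).
  assert (48 * L^6 * e^2 * m <= 48 * L^8 * e^2 * m)
    by (apply Rmult_le_compat_r; [lra |]; apply Rmult_le_compat_r; nra).
  assert (Ha2 : (a^2/2 - a/2)*m^2 >= - (a/2*m^2)) by nra.
  assert (Ham : a/2*m^2 <= 6 * L^8 * e^2 * m).
  { assert (a*m <= (3*L^2*e)*(4*L*e)) by (apply Rmult_le_compat; lra).
    assert (L^3 <= L^8) by (apply Rle_pow; [lra | lia]).
    assert (a*m*m <= 12*L^3*e^2*m) by (apply Rmult_le_compat_r; nra).
    assert (12*L^3*e^2*m <= 12*L^8*e^2*m)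
      by (apply Rmult_le_compat_r; [lra |]; apply Rmult_le_compat_r; nra).
    nra. }
  assert (0 <= L^8*e^2*m) by (apply Rmult_le_pos; [| lra]; apply Rmult_le_pos; apply pow_le; lra).
  lra.
Qed.

Lemma pot_upper_taylor2_le :
  pot_upper a s m + (pot_upper a s m)^2/2 - m - (a*m - (1+s)*m^2) <= 500 * L^8 * e^2 * m.
Proof.
  pose proof m_le_twelfth. pose proof m_cube_le.
  set (b := 3*(1+a)/2 + s). set (z := b*m^2 - 2*(1+a+s)*m^3).
  assert (L48 : L^4 <= L^8) by (apply Rle_pow; [lra | lia]).
  assert (L68 : L^6 <= L^8) by (apply Rle_pow; [lra | lia]).
  assert (Hm3 : 0 <= m^3 <= m^2) by (split; [apply pow_le |]; nra).
  assert (Hm4 : 0 <= m^4 <= m^3)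
    by (split; [apply pow_le | replace (m^4) with (m^3*m) by ring]; nra).
  replace (pot_upper a s m + (pot_upper a s m)^2/2 - m - (a*m - (1+s)*m^2))
    with ((a^2/2 - a/2)*m^2 + 2*(1+a+s)*m^3 - (1+a)*b*m^3 + 2*(1+a)*(1+a+s)*m^4 + z^2/2)
    by (unfold pot_upper, z, b; field).
  assert (Hz : Rabs z <= 7/2*L^2 * m^2).
  { unfold z. apply Rabs_le.
    assert (b*m^2 <= 3/2*L^2 * m^2) by (apply Rmult_le_compat_r; unfold b; nra).
    assert ((1+a+s)*m^3 <= L^2 * m^2) by (apply Rmult_le_compat; lra).
    assert (0 <= b*m^2) by (unfold b; nra).
    assert (0 <= (1+a+s)*m^3) by nra.
    split; lra. }
  assert (Z : z^2 <= (7/2*L^2)^2 * m^4).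
  { rewrite <- pow2_abs. replace ((7/2*L^2)^2 * m^4) with ((7/2*L^2*m^2)^2) by ring.
    apply pow_incr. split; [apply Rabs_pos | exact Hz]. }
  replace (500 * L^8 * e^2 * m) with (500 * (L^8 * e^2 * m)) by ring.
  set (k := L^8 * e^2 * m).
  assert (Hk4 : L^4 * e^2 * m <= k)
    by (apply Rmult_le_compat_r; [lra |]; apply Rmult_le_compat_r; nra).
  assert (Hk6 : L^6 * e^2 * m <= k)
    by (apply Rmult_le_compat_r; [lra |]; apply Rmult_le_compat_r; nra).
  assert (T1 : a^2/2 * m^2 <= 5 * k).
  { assert (a*a <= (3*L^2*e)*(3*L^2*e)) by (apply Rmult_le_compat; lra).
    assert (a^2 * m^2 <= (9*L^4*e^2) * m) by (apply Rmult_le_compat; nra). nra. }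
  assert (T2 : 2*(1+a+s)*m^3 <= 32 * k).
  { assert ((1+a+s)*m^3 <= L^2 * (16*L^2*e^2*m)) by (apply Rmult_le_compat; lra). nra. }
  assert (T3 : 2*(1+a)*(1+a+s)*m^4 <= 32 * k).
  { assert ((1+a)*(1+a+s) <= L^2*L^2) by (apply Rmult_le_compat; lra).
    assert ((1+a)*(1+a+s)*m^4 <= (L^2*L^2)*(16*L^2*e^2*m)) by (apply Rmult_le_compat; nra).
    nra. }
  assert (T4 : z^2/2 <= 100 * k).
  { assert ((7/2*L^2)^2 * m^4 <= (49/4*L^4) * (16*L^2*e^2*m)) by (apply Rmult_le_compat; nra).
    nra. }
  assert (0 <= (1+a)*b*m^3) by (apply Rmult_le_pos; [apply Rmult_le_pos |]; unfold b; lra).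
  assert (0 <= a/2*m^2) by nra.
  assert (0 <= k) by (unfold k; nra).
  lra.
Qed.

Lemma pot_upper_cube_le : (pot_upper a s m)^3 <= 432 * L^8 * e^2 * m.
Proof.
  destruct pot_brackets_bounds as [_ Hhi]. pose proof m_cube_le.
  assert (0 <= pot_upper a s m).
  { destruct (pot_1p_bounds c s a m s_nonneg c_sqr (proj1 m_range)).
    destruct pot_brackets_bounds. lra. }
  assert ((pot_upper a s m)^3 <= (3*L^2*m)^3) by (apply pow_incr; lra).
  assert (L^6 * m^3 <= L^6 * (16 * L^2 * e^2 * m))
    by (apply Rmult_le_compat_l; [apply pow_le |]; lra).
  replace ((3*L^2*m)^3) with (27 * (L^6 * m^3)) in * by ring.
  lra.
Qed.

Lemma exp_pot_1p_expansion :
  Rabs (exp (pot c s (1+m)) - (1+m) - (a*m - (1+s)*m^2)) <= 1000 * L^8 * e^2 * m.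
Proof.
  destruct (pot_1p_bounds c s a m s_nonneg c_sqr (proj1 m_range)) as [Hlo Hhi].
  destruct pot_brackets_bounds as [Hlo0 Hhi1].
  pose proof pot_lower_taylor2_ge. pose proof pot_upper_taylor2_le. pose proof pot_upper_cube_le.
  assert (E1 : 1 + pot_lower a s m + (pot_lower a s m)^2/2 <= exp (pot c s (1+m)))
    by (eapply Rle_trans; [apply exp_ge_taylor2, Hlo0 | apply exp_le_compat, Hlo]).
  assert (E2 : exp (pot c s (1+m))
                <= 1 + pot_upper a s m + (pot_upper a s m)^2/2 + (pot_upper a s m)^3).
  { eapply Rle_trans; [apply exp_le_compat, Hhi | apply exp_le_taylor3].
    pose proof m_le_twelfth.
    assert (3 * L^2 * m <= 3 * L^2 * (4*L*e)) by (apply Rmult_le_compat_l; nra).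
    split; nra. }
  assert (0 <= L^8*e^2*m) by (apply Rmult_le_pos; [| lra]; apply Rmult_le_pos; apply pow_le; lra).
  apply Rabs_le. lra.
Qed.

Lemma dpot_1p_le : dpot c s (1+m) <= 1 + a.
Proof.
  pose proof m_le_twelfth.
  destruct (dpot_1p_bounds c s m s_nonneg ltac:(lra) ltac:(lra)). lra.
Qed.

Lemma dpot_1p_near1 : Rabs (dpot c s (1+m) - 1) <= 15 * L^3 * e.
Proof.
  pose proof m_le_twelfth.
  destruct (dpot_1p_bounds c s m s_nonneg ltac:(lra) ltac:(lra)).
  assert (L23 : L^2 <= L^3) by (apply Rle_pow; [lra | lia]).
  assert (c^2 * m <= L^2 * (4*L*e)) by (apply Rmult_le_compat; try lra; apply pow2_ge_0).
  assert (L^2 * e <= L^3 * e) by (apply Rmult_le_compat_r; lra).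
  apply Rabs_le. split; nra.
Qed.

Lemma sagdeev_deriv_1p_expansion :
  Rabs (dpot c s (1+m) * (exp (pot c s (1+m)) - (1+m)) - (a*m - (1+s)*m^2))
    <= 20000 * L^11 * e^2 * m.
Proof.
  pose proof exp_pot_1p_expansion as HD. pose proof dpot_1p_near1 as Hh.
  set (h := dpot c s (1+m)) in *. set (D := exp (pot c s (1+m)) - (1+m)) in *.
  set (T := a*m - (1+s)*m^2) in *.
  assert (L3 : 1 <= L^3) by (apply pow_R1_Rle; lra).
  assert (L38 : L^3 <= L^8) by (apply Rle_pow; [lra | lia]).
  assert (L811 : L^8 <= L^11) by (apply Rle_pow; [lra | lia]).
  assert (He1 : e <= 1) by nra.
  assert (HT : Rabs T <= 7 * L^3 * e * m).
  { unfold T. apply Rabs_le.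
    assert (a*m <= 3*L^2*e*m) by (apply Rmult_le_compat_r; lra).
    assert ((1+s)*m <= L^2*(4*L*e)) by (apply Rmult_le_compat; lra).
    assert ((1+s)*m^2 <= 4*L^3*e*m) by (replace ((1+s)*m^2) with (((1+s)*m)*m) by ring; nra).
    assert (L^2*e*m <= L^3*e*m)
      by (apply Rmult_le_compat_r; [lra |];
          apply Rmult_le_compat_r; [lra | apply Rle_pow; [lra | lia]]).
    assert (0 <= a*m) by nra. assert (0 <= (1+s)*m^2) by nra.
    split; lra. }
  assert (HDb : Rabs D <= 1007 * L^8 * e * m).
  { replace D with ((D - T) + T) by ring.
    eapply Rle_trans; [apply Rabs_triang |].
    assert (0 <= L^8*e*m) by (apply Rmult_le_pos; [apply Rmult_le_pos; [apply pow_le |] |]; lra).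
    assert (L^8*e^2*m <= L^8*e*m)
      by (replace (L^8*e^2*m) with ((L^8*e*m)*e) by ring; rewrite <- Rmult_1_r;
          apply Rmult_le_compat_l; lra).
    assert (L^3*e*m <= L^8*e*m) by (apply Rmult_le_compat_r; [lra |]; apply Rmult_le_compat_r; lra).
    lra. }
  replace (h * D - T) with ((D - T) + (h - 1) * D) by ring.
  eapply Rle_trans; [apply Rabs_triang |]. rewrite Rabs_mult.
  assert (Rabs (h - 1) * Rabs D <= (15*L^3*e) * (1007*L^8*e*m))
    by (apply Rmult_le_compat; try apply Rabs_pos; lra).
  assert (L^8*e^2*m <= L^11*e^2*m)
    by (apply Rmult_le_compat_r; [lra |]; apply Rmult_le_compat_r; nra).
  assert (0 <= L^11*e^2*m) by (apply Rmult_le_pos; [apply Rmult_le_pos; [apply pow_le |] |]; nra).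
  nra.
Qed.

End NearOne.

Lemma sagdeev_1p_expansion (L e m a s c : R) :
  1 <= L -> 0 < e -> 48 * L^3 * e <= 1 -> 0 <= m <= 4*L*e -> 0 <= a <= 3*L^2*e ->
  0 <= s -> c^2 = 1 + a + s -> 1 + a + s <= L^2 ->
  Rabs (sagdeev c s (1+m) - (a*m^2/2 - (1+s)*m^3/3)) <= 10000 * L^11 * e^2 * m^2.
Proof.
  intros HL He HLe Hm Ha Hs Hc HcL.
  replace (10000 * L^11 * e^2 * m^2) with (20000 * L^11 * e^2 * m^2 / 2) by field.
  apply (abs_le_of_derive_abs_le (fun y => sagdeev c s (1+y) - (a*y^2/2 - (1+s)*y^3/3))
           (fun x => dpot c s (1+x) * (exp (pot c s (1+x)) - (1+x)) - (a*x - (1+s)*x^2)));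
    [lra | rewrite Rplus_0_r, sagdeev_1; field | |].
  - intros x Hx.
    apply (is_derive_minus (fun y => sagdeev c s (1+y)) (fun y => a*y^2/2 - (1+s)*y^3/3)).
    + replace (dpot c s (1+x) * (exp (pot c s (1+x)) - (1+x)))
        with (1 * (dpot c s (1+x) * (exp (pot c s (1+x)) - (1+x)))) by ring.
      apply (is_derive_comp (sagdeev c s) (fun y => 1 + y)).
      * apply is_derive_sagdeev. lra.
      * auto_derive; [exact I | field].
    + auto_derive; [exact I | field].
  - intros x Hx. apply (sagdeev_deriv_1p_expansion L); lra.
Qed.

(** * Small-amplitude solitary waves *)

Definition speed (s g e : R) : R := Vspeed s + g * e.
Definition excess (s g e : R) : R := speed s g e ^ 2 - s - 1.
(* The error constants are powers of [Lbound s g], which dominates [1], [V] and [g];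
   [Kerr s g * eps^2 * m^2] bounds the error of the cubic approximation of [sagdeev]
   near [n = 1]. *)
Definition Lbound (s g : R) : R := 1 + Vspeed s + g.
Definition Kerr (s g : R) : R := 10000 * Lbound s g ^ 11.
Definition eps_max (s g : R) : R :=
  Rmin (1 / (48 * Lbound s g ^ 3)) (g / (40 * (g^2 + Kerr s g))).
Definition Dbound (s g : R) : R := 16 * g^2 * (2 * Lbound s g ^ 2 + Kerr s g).
Definition Cbound (s g : R) : R := 3 + 10 * Dbound s g + 8712 * Dbound s g * Lbound s g ^ 6.

Lemma Vspeed_ge1 (s : R) : 0 <= s -> 1 <= Vspeed s.
Proof.
  intros Hs. unfold Vspeed. rewrite <- sqrt_1 at 1. apply sqrt_le_1_alt. lra.
Qed.

Lemma Vspeed_sqr (s : R) : 0 <= s -> Vspeed s ^ 2 = 1 + s.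
Proof. intros Hs. unfold Vspeed. rewrite <- Rsqr_pow2. apply Rsqr_sqrt. lra. Qed.

Lemma excess_eq (s g e : R) : 0 <= s -> excess s g e = 2 * Vspeed s * g * e + g^2 * e^2.
Proof. intros Hs. unfold excess, speed. pose proof (Vspeed_sqr s Hs). nra. Qed.

Lemma Lbound_ge1 (s g : R) : 0 <= s -> 0 < g -> 1 <= Lbound s g.
Proof. intros Hs Hg. pose proof (Vspeed_ge1 s Hs). unfold Lbound. lra. Qed.

Lemma Kerr_nonneg (s g : R) : 0 <= s -> 0 < g -> 0 <= Kerr s g.
Proof.
  intros Hs Hg. pose proof (Lbound_ge1 s g Hs Hg).
  unfold Kerr. apply Rmult_le_pos; [lra | apply pow_le; lra].
Qed.

Lemma eps_max_pos (s g : R) : 0 <= s -> 0 < g -> 0 < eps_max s g.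
Proof.
  intros Hs Hg. pose proof (Lbound_ge1 s g Hs Hg). pose proof (Kerr_nonneg s g Hs Hg).
  assert (0 < Lbound s g ^ 3) by (apply pow_lt; lra).
  apply Rmin_pos; apply Rdiv_lt_0_compat; nra.
Qed.

Lemma Dbound_nonneg (s g : R) : 0 <= s -> 0 < g -> 0 <= Dbound s g.
Proof.
  intros Hs Hg. pose proof (Kerr_nonneg s g Hs Hg).
  unfold Dbound. apply Rmult_le_pos; [nra | pose proof (pow2_ge_0 (Lbound s g)); lra].
Qed.

Lemma Cbound_pos (s g : R) : 0 <= s -> 0 < g -> 0 < Cbound s g.
Proof.
  intros Hs Hg. pose proof (Dbound_nonneg s g Hs Hg). pose proof (Lbound_ge1 s g Hs Hg).
  assert (0 <= Dbound s g * Lbound s g ^ 6) by (apply Rmult_le_pos; [| apply pow_le]; lra).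
  unfold Cbound. lra.
Qed.

Lemma solitary_wave_reduction (s g e : R) (n u phi : R -> R) :
  solitary_wave s g e n u phi ->
  (forall x, 1 < n x <= n 0) /\
  (forall x, phi x = pot (speed s g e) s (n x)) /\
  (forall x, Derive phi x = dpot (speed s g e) s (n x) * Derive n x) /\
  (forall x, e * (Derive phi x)^2 / 2 = sagdeev (speed s g e) s (n x)) /\
  Derive phi 0 = 0.
Proof.
  intros [[Sn [Su [Sp [Hpos [Emass [Emom [Epois [Hn [_ [Hu [_ [Hphi _]]]]]]]]]]]]
          [_ [Hev_n [_ [Hev_phi [Hdecr_n _]]]]]].
  assert (dn : forall x, ex_derive n x) by exact (fun x => Sn 1%nat x).
  assert (du : forall x, ex_derive u x) by exact (fun x => Su 1%nat x).
  assert (dphi : forall x, ex_derive phi x) by exact (fun x => Sp 1%nat x).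
  assert (dphi2 : forall x, ex_derive (Derive phi) x) by exact (fun x => Sp 2%nat x).
  fold (speed s g e) in Emass, Emom.
  destruct (even_decr_profile n 1 (continuity_pt_of_ex_derive n 0 (dn 0)) Hev_n Hdecr_n Hn)
    as [Hgt Hle].
  repeat split.
  - apply Hgt.
  - apply Hle.
  - intros x. now apply (phi_of_n s (speed s g e) n u phi).
  - intros x. now apply (Derive_phi_of_n s (speed s g e) n u phi).
  - intros x. now apply (sagdeev_first_integral s (speed s g e) e n u phi).
  - now apply Derive_even_0.
Qed.

Lemma Derive_Ntilde (e : R) (n : R -> R) (x : R) :
  e <> 0 -> ex_derive n x -> Derive (Ntilde e n) x = Derive n x / e.
Proof.
  intros He dn. unfold Ntilde. apply is_derive_unique.
  auto_derive; [repeat split; auto |]. change (fun y : R => n y) with n. field. exact He.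
Qed.

Lemma Derive_Etilde (e : R) (n phi : R -> R) (x : R) : e <> 0 -> ex_derive (Derive phi) x ->
  e * Derive_n phi 2 x = exp (phi x) - n x -> Derive (Etilde e phi) x = (n x - exp (phi x)) / e^2.
Proof.
  intros He dphi2 Hpois. change (Derive_n phi 2 x) with (Derive (Derive phi) x) in Hpois.
  unfold Etilde. apply is_derive_unique.
  auto_derive; [repeat split; auto |]. change (fun y : R => Derive phi y) with (Derive phi).
  replace (n x - exp (phi x)) with (- (e * Derive (Derive phi) x)) by lra.
  field. exact He.
Qed.

Lemma Derive2_Etilde (e : R) (n phi : R -> R) (x : R) : e <> 0 ->
  (forall y, ex_derive n y) -> (forall y, ex_derive phi y) ->
  (forall y, ex_derive (Derive phi) y) ->
  (forall y, e * Derive_n phi 2 y = exp (phi y) - n y) ->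
  Derive_n (Etilde e phi) 2 x = (Derive n x - exp (phi x) * Derive phi x) / e^2.
Proof.
  intros He dn dphi dphi2 Hpois.
  change (Derive_n (Etilde e phi) 2 x) with (Derive (Derive (Etilde e phi)) x).
  rewrite (Derive_ext _ (fun y => (n y - exp (phi y)) / e^2) x)
    by (intros y; apply Derive_Etilde; auto).
  apply is_derive_unique. auto_derive; [repeat split; auto |].
  change (fun y : R => n y) with n. change (fun y : R => phi y) with phi. field. exact He.
Qed.
Section SmallAmplitude.

Variables (s g e : R).

Hypothesis s_nonneg : 0 <= s.
Hypothesis g_pos : 0 < g.
Hypothesis e_pos : 0 < e.
Hypothesis e_lt : e < eps_max s g.

Local Notation V := (Vspeed s).
Local Notation L := (Lbound s g).
Local Notation K := (Kerr s g).

Lemma L_ge1 : 1 <= L.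
Proof. exact (Lbound_ge1 s g s_nonneg g_pos). Qed.

Lemma K_nonneg : 0 <= K.
Proof. exact (Kerr_nonneg s g s_nonneg g_pos). Qed.

Lemma eps_small_L : 48 * L^3 * e <= 1.
Proof.
  pose proof L_ge1.
  assert (HL3 : 0 < L^3) by (apply pow_lt; lra).
  assert (He : e <= 1 / (48 * L^3)) by (eapply Rle_trans; [apply Rlt_le, e_lt | apply Rmin_l]).
  apply (Rmult_le_compat_l (48 * L^3)) in He; [| lra].
  replace (48 * L^3 * (1 / (48 * L^3))) with 1 in He by (field; lra). lra.
Qed.

Lemma eps_small_Kerr : 40 * (g^2 + K) * e <= g.
Proof.
  assert (HK : 0 < 40 * (g^2 + K)) by (pose proof K_nonneg; nra).
  assert (He : e <= g / (40 * (g^2 + K)))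
    by (eapply Rle_trans; [apply Rlt_le, e_lt | apply Rmin_r]).
  apply (Rmult_le_compat_l (40 * (g^2 + K))) in He; [| lra].
  replace (40 * (g^2 + K) * (g / (40 * (g^2 + K)))) with g in He by (field; lra). lra.
Qed.

Lemma e_le1 : e <= 1.
Proof.
  pose proof eps_small_L. pose proof L_ge1. assert (1 <= L^3) by (apply pow_R1_Rle; lra). nra.
Qed.

Lemma excess_range : 2 * g * e <= excess s g e <= 3 * L^2 * e.
Proof.
  rewrite excess_eq by exact s_nonneg. pose proof e_le1. pose proof (Vspeed_ge1 s s_nonneg).
  assert (HL : L = 1 + V + g) by reflexivity.
  assert (0 <= g * e) by nra. split; [nra |].
  assert (g^2 * e^2 <= g^2 * e) by (replace (g^2*e^2) with ((g^2*e)*e) by ring; nra).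
  assert (V * g <= L * L) by (apply Rmult_le_compat; lra).
  assert (g * g <= L * L) by (apply Rmult_le_compat; lra).
  nra.
Qed.

Lemma speed_sqr : speed s g e ^ 2 = 1 + excess s g e + s.
Proof. unfold excess. ring. Qed.

Lemma speed_sqr_le : 1 + excess s g e + s <= L^2.
Proof.
  rewrite <- speed_sqr. pose proof e_le1. pose proof (Vspeed_ge1 s s_nonneg).
  assert (HL : L = 1 + V + g) by reflexivity. unfold speed.
  assert (g * e <= g) by nra.
  apply pow_incr. nra.
Qed.

Lemma amplitude_le_L (m : R) : 0 <= m <= 4 * g * e -> 0 <= m <= 4 * L * e.
Proof.
  intros Hm. pose proof (Vspeed_ge1 s s_nonneg).
  assert (HL : L = 1 + V + g) by reflexivity. nra.
Qed.

Lemma sagdeev_speed_expansion (m : R) : 0 <= m <= 4 * g * e ->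
  Rabs (sagdeev (speed s g e) s (1+m) - (excess s g e * m^2/2 - (1+s)*m^3/3)) <= K * e^2 * m^2.
Proof.
  intros Hm. replace (K * e^2 * m^2) with (10000 * L^11 * e^2 * m^2) by (unfold Kerr; ring).
  pose proof excess_range.
  apply (sagdeev_1p_expansion L); auto using L_ge1, eps_small_L, speed_sqr, speed_sqr_le,
    amplitude_le_L; lra.
Qed.

Lemma sagdeev_speed_bounds (m : R) : 0 <= m <= 4 * g * e ->
  m^2 * (V * g * e - (1+s)*m/3 - K * e^2) <= sagdeev (speed s g e) s (1+m) <=
  m^2 * (V * g * e + g^2*e^2/2 - (1+s)*m/3 + K * e^2).
Proof.
  intros Hm. pose proof (sagdeev_speed_expansion m Hm) as HP.
  rewrite excess_eq in HP by exact s_nonneg.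
  apply Rabs_le_between in HP. split; nra.
Qed.

Variables (n u phi : R -> R).
Hypothesis wave : solitary_wave s g e n u phi.

Local Notation c := (speed s g e).

Lemma wave_n_diff (x : R) : ex_derive n x.
Proof. destruct wave as [[Sn _] _]. exact (Sn 1%nat x). Qed.

Lemma wave_phi_diff (x : R) : ex_derive phi x.
Proof. destruct wave as [[_ [_ [Sphi _]]] _]. exact (Sphi 1%nat x). Qed.

Lemma wave_phi_diff2 (x : R) : ex_derive (Derive phi) x.
Proof. destruct wave as [[_ [_ [Sphi _]]] _]. exact (Sphi 2%nat x). Qed.

Lemma wave_poisson (x : R) : e * Derive_n phi 2 x = exp (phi x) - n x.
Proof. destruct wave as [[_ [_ [_ [_ [_ [_ [Hpois _]]]]]]] _]. apply Hpois. Qed.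

Lemma wave_n_lim : is_lim n p_infty 1.
Proof. destruct wave as [[_ [_ [_ [_ [_ [_ [_ [Hlim _]]]]]]]] _]. exact Hlim. Qed.

Lemma n_range (x : R) : 1 < n x <= n 0.
Proof. apply (solitary_wave_reduction s g e n u phi wave). Qed.

Lemma phi_pot (x : R) : phi x = pot c s (n x).
Proof. apply (solitary_wave_reduction s g e n u phi wave). Qed.

Lemma Derive_phi_dpot (x : R) : Derive phi x = dpot c s (n x) * Derive n x.
Proof. apply (solitary_wave_reduction s g e n u phi wave). Qed.

Lemma sagdeev_integral (x : R) : e * (Derive phi x)^2 / 2 = sagdeev c s (n x).
Proof. apply (solitary_wave_reduction s g e n u phi wave). Qed.

Lemma sagdeev_amplitude : sagdeev c s (n 0) = 0.
Proof.
  rewrite <- sagdeev_integral.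
  replace (Derive phi 0) with 0 by (symmetry; apply (solitary_wave_reduction s g e n u phi wave)).
  field.
Qed.

Lemma Kerr_eps_le : K * e <= g / 40.
Proof. pose proof eps_small_Kerr. pose proof K_nonneg. assert (0 <= g^2 * e) by nra. nra. Qed.

(* [n 0 - 1] is the positive zero of [sagdeev], close to the root [3 g e / V] of the cubic
   [excess * m^2 / 2 - (1+s) * m^3 / 3]. *)
Lemma amplitude_gt : 2.85 * g * e < V * (n 0 - 1).
Proof.
  destruct (Rlt_le_dec (2.85 * g * e) (V * (n 0 - 1))) as [| Hle]; auto. exfalso.
  set (m0 := n 0 - 1) in *.
  pose proof (n_range 0) as Hn0. pose proof (Vspeed_ge1 s s_nonneg). pose proof Kerr_eps_le.
  pose proof (Vspeed_sqr s s_nonneg) as HV2.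
  assert (Hm0 : 0 < m0) by (unfold m0; lra).
  assert (m0 <= V * m0) by nra.
  destruct (sagdeev_speed_bounds m0 ltac:(nra)) as [Hlow _].
  replace (1 + m0) with (n 0) in Hlow by (unfold m0; ring).
  rewrite sagdeev_amplitude in Hlow.
  assert ((1+s) * m0 <= V * (2.85 * g * e))
    by (rewrite <- HV2; replace (V^2 * m0) with (V * (V * m0)) by ring;
        apply Rmult_le_compat_l; lra).
  assert (0 < V * g * e - (1+s)*m0/3 - K * e^2) by nra.
  assert (0 < m0^2) by nra.
  assert (0 < m0^2 * (V * g * e - (1+s)*m0/3 - K * e^2)) by (apply Rmult_lt_0_compat; lra).
  lra.
Qed.

Lemma amplitude_lt : V * (n 0 - 1) < 3.15 * g * e.
Proof.
  destruct (Rlt_le_dec (V * (n 0 - 1)) (3.15 * g * e)) as [| Hge]; auto. exfalso.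
  pose proof (Vspeed_ge1 s s_nonneg). pose proof Kerr_eps_le. pose proof K_nonneg.
  pose proof (Vspeed_sqr s s_nonneg) as HV2.
  set (m1 := 3.15 * g * e / V).
  assert (Hm1 : 0 < m1) by (unfold m1; apply Rdiv_lt_0_compat; nra).
  assert (HVm1 : V * m1 = 3.15 * g * e) by (unfold m1; field; lra).
  assert (m1 <= n 0 - 1) by nra.
  assert (m1 <= V * m1) by nra.
  destruct (exists_preimage_below_max n 1 (1 + m1)) as [x Hx];
    [intros x; apply continuity_pt_of_ex_derive, wave_n_diff | exact wave_n_lim | lra |].
  assert (Hpos : 0 <= sagdeev c s (1 + m1)).
  { rewrite <- Hx, <- sagdeev_integral. pose proof (pow2_ge_0 (Derive phi x)). nra. }
  destruct (sagdeev_speed_bounds m1 ltac:(nra)) as [_ Hup].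
  assert ((1+s) * m1 = V * (3.15 * g * e)) by (rewrite <- HV2, <- HVm1; ring).
  assert (V * g * e + g^2*e^2/2 - (1+s)*m1/3 + K * e^2 < 0).
  { pose proof eps_small_Kerr. assert (0.05 * g * e <= 0.05 * V * g * e) by nra. nra. }
  assert (0 < m1^2) by nra.
  assert (0 < m1^2 * (-(V * g * e + g^2*e^2/2 - (1+s)*m1/3 + K * e^2)))
    by (apply Rmult_lt_0_compat; lra).
  lra.
Qed.

Lemma amplitude_range (x : R) : 0 < n x - 1 <= 4 * g * e.
Proof.
  pose proof (n_range x). pose proof amplitude_lt. pose proof (Vspeed_ge1 s s_nonneg).
  assert (n 0 - 1 <= V * (n 0 - 1)) by nra.
  assert (0 < g * e) by nra. lra.
Qed.

Lemma Ntilde_0_gt : Ntilde e n 0 > 2 * g / V.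
Proof.
  pose proof amplitude_gt. pose proof (Vspeed_ge1 s s_nonneg).
  unfold Ntilde. apply Rlt_gt, (Rmult_lt_reg_r (e * V)); [nra |].
  replace (2 * g / V * (e * V)) with (2 * g * e) by (field; lra).
  replace ((n 0 - 1) / e * (e * V)) with (V * (n 0 - 1)) by (field; lra).
  nra.
Qed.

(* [phi'(0) = 0] makes [sagdeev c s (n 0)] vanish, which expresses [exp (phi 0)] rationally
   in [n 0]. *)
Lemma crest_charge :
  n 0 - exp (phi 0) = (n 0 - 1) * ((1 + s) * (n 0 - 1) - excess s g e) / n 0.
Proof.
  pose proof sagdeev_amplitude as HP. pose proof (n_range 0).
  unfold sagdeev in HP. rewrite phi_pot.
  replace (exp (pot c s (n 0))) with (1 + (c^2 * (1 - 1/n 0) - s * (n 0 - 1))) by lra.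
  rewrite speed_sqr. field. lra.
Qed.

Lemma Derive_Etilde_0_bounds : 2 * g^2 < Derive (Etilde e phi) 0 < 4 * g^2.
Proof.
  rewrite (Derive_Etilde e n phi 0) by (auto using wave_phi_diff2, wave_poisson; lra).
  rewrite crest_charge, excess_eq by exact s_nonneg.
  pose proof amplitude_gt. pose proof amplitude_lt. pose proof (n_range 0).
  pose proof (Vspeed_ge1 s s_nonneg). pose proof (Vspeed_sqr s s_nonneg) as HV2.
  pose proof eps_small_Kerr. pose proof K_nonneg.
  assert (Hge : 0 < g * e) by nra.
  assert (Hge40 : g * e <= 1/40) by nra.
  set (m0 := n 0 - 1) in *. set (q := V * m0) in *.
  assert (Hnum : m0 * ((1 + s) * m0 - (2 * V * g * e + g^2 * e^2))
                = q * (q - 2*g*e) - m0 * g^2 * e^2)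
    by (unfold q; rewrite <- HV2; ring).
  assert (Hq1 : 2.4225 * (g*e)^2 < q * (q - 2*g*e)).
  { assert (2.85*g*e*(0.85*g*e) < q * (q - 2*g*e)) by (apply Rmult_le_0_lt_compat; nra). nra. }
  assert (Hq2 : q * (q - 2*g*e) < 3.6225 * (g*e)^2).
  { assert (q * (q - 2*g*e) < 3.15*g*e*(1.15*g*e)) by (apply Rmult_le_0_lt_compat; nra). nra. }
  assert (Hm0 : 0 < m0 <= 3.15 * g * e) by (unfold q in *; split; nra).
  assert (Hq3 : 0 <= m0 * g^2 * e^2 <= 3.15 * (g*e)^3).
  { split; [nra |].
    assert (m0 * (g^2*e^2) <= (3.15*g*e) * (g^2*e^2)) by (apply Rmult_le_compat_r; nra). nra. }
  assert (Hden : 0 < n 0 * e^2) by nra.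
  replace (n 0) with (1 + m0) in * by (unfold m0; ring).
  split; apply (Rmult_lt_reg_r ((1 + m0) * e^2)); auto;
    replace (m0 * ((1 + s) * m0 - (2 * V * g * e + g^2 * e^2)) / (1 + m0) / e^2 * ((1 + m0) * e^2))
      with (m0 * ((1 + s) * m0 - (2 * V * g * e + g^2 * e^2))) by (field; lra);
    rewrite Hnum; nra.
Qed.

Lemma near_one_estimates (m : R) : 0 <= m <= 4 * g * e ->
  Rabs (dpot c s (1+m) - 1) <= 15 * L^3 * e /\ dpot c s (1+m) <= 1 + excess s g e /\
  0 <= pot c s (1+m) <= 3 * L^2 * m.
Proof.
  intros Hm.
  assert (Hm' : 0 <= m <= 4*L*e) by (apply amplitude_le_L; lra).
  assert (Ha : 0 <= excess s g e <= 3*L^2*e) by (pose proof excess_range; nra).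
  pose proof L_ge1. pose proof eps_small_L. pose proof speed_sqr. pose proof speed_sqr_le.
  repeat split;
    [eapply dpot_1p_near1 | eapply dpot_1p_le | eapply pot_1p_range | eapply pot_1p_range]; eauto.
Qed.

Lemma near_one_at (x : R) :
  Rabs (dpot c s (n x) - 1) <= 15 * L^3 * e /\ dpot c s (n x) <= 1 + excess s g e /\
  0 <= pot c s (n x) <= 3 * L^2 * (n x - 1).
Proof.
  pose proof (amplitude_range x).
  pose proof (near_one_estimates (n x - 1) ltac:(lra)) as Hnear.
  now replace (1 + (n x - 1)) with (n x) in Hnear by ring.
Qed.

Lemma sup_h_gt : Rbar_lt (Finite (1/2)) (Lub_Rbar (fun y => exists x, y = hfun s g e (n x))).
Proof.
  destruct (Lub_Rbar_correct (fun y => exists x, y = hfun s g e (n x))) as [Hub _].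
  apply Rbar_lt_le_trans with (Finite (hfun s g e (n 0))); [| apply Hub; now exists 0].
  change (1/2 < dpot c s (n 0)).
  destruct (near_one_at 0) as [Hh _]. apply Rabs_le_between in Hh.
  pose proof eps_small_L. lra.
Qed.

Lemma sup_h_lt : Rbar_lt (Lub_Rbar (fun y => exists x, y = hfun s g e (n x))) (Finite (3/2)).
Proof.
  destruct (Lub_Rbar_correct (fun y => exists x, y = hfun s g e (n x))) as [_ Hlub].
  apply Rbar_le_lt_trans with (Finite (1 + excess s g e)).
  - apply Hlub. intros y [x ->]. apply (near_one_at x).
  - pose proof excess_range. pose proof eps_small_L. pose proof L_ge1.
    assert (L^2 * e <= L^3 * e) by (apply Rmult_le_compat_r; [lra | apply Rle_pow; [lra | lia]]).
    simpl. lra.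
Qed.

Local Notation D := (Dbound s g).

Lemma Derive_phi_sqr_le (x : R) : (Derive phi x)^2 <= 2 * D * e^2.
Proof.
  pose proof (amplitude_range x) as Hm. pose proof (sagdeev_integral x) as HP.
  destruct (sagdeev_speed_bounds (n x - 1) ltac:(lra)) as [_ Hup].
  replace (1 + (n x - 1)) with (n x) in Hup by ring. rewrite <- HP in Hup.
  pose proof L_ge1. pose proof K_nonneg. pose proof e_le1. pose proof (Vspeed_ge1 s s_nonneg).
  assert (HL : L = 1 + V + g) by reflexivity.
  set (m := n x - 1) in *.
  assert (Hbr : V*g*e + g^2*e^2/2 - (1+s)*m/3 + K*e^2 <= (2*L^2 + K)*e).
  { assert (V*g*e <= L*L*e) by (apply Rmult_le_compat_r; [lra | apply Rmult_le_compat; lra]).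
    assert (g*g <= L*L) by (apply Rmult_le_compat; lra).
    assert (g^2*e^2 <= g^2*e)
      by (replace (g^2*e^2) with ((g^2*e)*e) by ring; rewrite <- (Rmult_1_r (g^2*e)) at 2;
          apply Rmult_le_compat_l; nra).
    assert (g^2*e <= L^2*e) by (apply Rmult_le_compat_r; nra).
    assert (K*e^2 <= K*e)
      by (replace (K*e^2) with ((K*e)*e) by ring; rewrite <- (Rmult_1_r (K*e)) at 2;
          apply Rmult_le_compat_l; nra).
    assert (0 <= (1+s)*m) by nra. nra. }
  assert (Hm2 : m^2 <= 16*g^2*e^2) by nra.
  assert (m^2 * (V*g*e + g^2*e^2/2 - (1+s)*m/3 + K*e^2) <= m^2 * ((2*L^2 + K)*e))
    by (apply Rmult_le_compat_l; nra).
  assert (m^2 * ((2*L^2 + K)*e) <= (16*g^2*e^2) * ((2*L^2 + K)*e))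
    by (apply Rmult_le_compat_r; nra).
  apply (Rmult_le_reg_l e); [exact e_pos |]. unfold Dbound. nra.
Qed.

Lemma Etilde_sqr_le (x : R) : (Etilde e phi x)^2 <= 2 * D.
Proof.
  pose proof (Derive_phi_sqr_le x).
  unfold Etilde. replace ((- Derive phi x / e)^2) with ((Derive phi x)^2 / e^2) by (field; lra).
  apply (Rmult_le_reg_r (e^2)); [nra |]. field_simplify; lra.
Qed.

Lemma Derive_n_sqr_le (x : R) : (Derive n x)^2 <= 8 * D * e^2.
Proof.
  pose proof (Derive_phi_sqr_le x) as Hphi'. rewrite Derive_phi_dpot in Hphi'.
  destruct (near_one_at x) as [Hh _]. apply Rabs_le_between in Hh.
  pose proof eps_small_L.
  assert (1/4 <= (dpot c s (n x))^2) by nra.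
  pose proof (pow2_ge_0 (Derive n x)). nra.
Qed.

Lemma Derive_Ntilde_sqr_le (x : R) : (Derive (Ntilde e n) x)^2 <= 8 * D.
Proof.
  rewrite Derive_Ntilde by (auto using wave_n_diff; lra).
  pose proof (Derive_n_sqr_le x).
  replace ((Derive n x / e)^2) with ((Derive n x)^2 / e^2) by (field; lra).
  apply (Rmult_le_reg_r (e^2)); [nra |]. field_simplify; lra.
Qed.

(* Since [phi' = h n'], the second derivative of [Etilde] is [n' (1 - exp(phi) h) / eps^2],
   and both factors of the numerator are [O(eps)]. *)
Lemma Derive2_Etilde_sqr_le (x : R) : (Derive_n (Etilde e phi) 2 x)^2 <= 8712 * D * L^6.
Proof.
  rewrite (Derive2_Etilde e n phi x)
    by (auto using wave_n_diff, wave_phi_diff, wave_phi_diff2, wave_poisson; lra).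
  rewrite Derive_phi_dpot, phi_pot.
  pose proof (amplitude_range x). pose proof (Derive_n_sqr_le x).
  destruct (near_one_at x) as [Hh [Hh_le HF]]. apply Rabs_le_between in Hh.
  pose proof L_ge1. pose proof eps_small_L. pose proof excess_range.
  pose proof (Dbound_nonneg s g s_nonneg g_pos).
  set (F := pot c s (n x)) in *. set (h := dpot c s (n x)) in *.
  assert (L23 : L^2 <= L^3) by (apply Rle_pow; [lra | lia]).
  assert (HF3 : F <= 12 * L^3 * e).
  { pose proof (amplitude_le_L (n x - 1) ltac:(lra)).
    assert (3*L^2*(n x - 1) <= 3*L^2*(4*L*e)) by (apply Rmult_le_compat_l; nra). nra. }
  assert (Ex1 : 1 <= exp F) by (pose proof (exp_ge_taylor2 F (proj1 HF)); nra).
  assert (Ex2 : exp F <= 1 + 2*F) by (pose proof (exp_le_taylor3 F ltac:(lra)); nra).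
  set (w := 1 - exp F * h).
  assert (Hw : Rabs w <= 33 * L^3 * e).
  { assert (exp F * h <= (1 + 2*F) * (1 + excess s g e)) by (apply Rmult_le_compat; nra).
    assert (h <= exp F * h) by nra.
    assert (2*F*excess s g e <= 2*(1/4)*(3*L^3*e)) by (apply Rmult_le_compat; nra).
    unfold w. apply Rabs_le. nra. }
  assert (Hw2 : w^2 <= (33*L^3*e)^2)
    by (rewrite <- pow2_abs; apply pow_incr; split; [apply Rabs_pos | lra]).
  replace ((Derive n x - exp F * (h * Derive n x)) / e^2) with (Derive n x * w / e^2)
    by (unfold w; field; lra).
  replace ((Derive n x * w / e^2)^2) with ((Derive n x)^2 * w^2 / e^4) by (field; lra).
  apply (Rmult_le_reg_r (e^4)); [apply pow_lt; lra |].
  replace ((Derive n x)^2 * w^2 / e^4 * e^4) with ((Derive n x)^2 * w^2) by (field; lra).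
  assert ((Derive n x)^2 * w^2 <= (8 * D * e^2) * (33*L^3*e)^2)
    by (apply Rmult_le_compat; auto using pow2_ge_0).
  nra.
Qed.

Lemma derivatives_bounded (x : R) :
  Rabs (Derive (Ntilde e n) x) + Rabs (Etilde e phi x) + Rabs (Derive_n (Etilde e phi) 2 x)
    <= Cbound s g.
Proof.
  pose proof (abs_le_1_plus_sqr (Derive (Ntilde e n) x)). pose proof (Derive_Ntilde_sqr_le x).
  pose proof (abs_le_1_plus_sqr (Etilde e phi x)). pose proof (Etilde_sqr_le x).
  pose proof (abs_le_1_plus_sqr (Derive_n (Etilde e phi) 2 x)).
  pose proof (Derive2_Etilde_sqr_le x).
  unfold Cbound. lra.
Qed.

(* Where [m = n - 1 <= delta * eps] the cubic term of [sagdeev] is dominated by the quadratic one,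
   so [eps * phi'^2 / 2 > m^2 * g * eps / 2]. *)
Lemma Etilde_sqr_gt (delta x : R) : 0 < delta < g / (1 + s) -> Ntilde e n x <= delta ->
  g * (Ntilde e n x)^2 < (Etilde e phi x)^2.
Proof.
  intros Hd HN. pose proof (amplitude_range x) as Hm. pose proof (sagdeev_integral x) as HP.
  pose proof (Vspeed_ge1 s s_nonneg). pose proof Kerr_eps_le. pose proof K_nonneg.
  destruct (sagdeev_speed_bounds (n x - 1) ltac:(lra)) as [Hlow _].
  replace (1 + (n x - 1)) with (n x) in Hlow by ring. rewrite <- HP in Hlow.
  unfold Ntilde in *. unfold Etilde. set (m := n x - 1) in *.
  assert (Hmd : m <= delta * e)
    by (apply (Rmult_le_compat_r e) in HN; [field_simplify in HN |]; lra).
  assert (Hsd : (1 + s) * delta < g).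
  { assert (Hd' : (1 + s) * delta < (1 + s) * (g / (1 + s))) by (apply Rmult_lt_compat_l; lra).
    replace ((1 + s) * (g / (1 + s))) with g in Hd' by (field; lra). exact Hd'. }
  assert (B1 : (1 + s) * m < g * e).
  { assert ((1+s)*m <= (1+s)*(delta*e)) by (apply Rmult_le_compat_l; lra). nra. }
  assert (B2 : g * e / 2 < V * g * e - (1+s)*m/3 - K * e^2) by nra.
  assert (B3 : m^2 * (g*e/2) < e * Derive phi x ^ 2 / 2).
  { assert (0 < m^2) by nra.
    assert (m^2 * (g*e/2) < m^2 * (V * g * e - (1+s)*m/3 - K * e^2))
      by (apply Rmult_lt_compat_l; lra). lra. }
  replace (g * (m / e)^2) with (g * m^2 / e^2) by (field; lra).
  replace ((- Derive phi x / e)^2) with ((Derive phi x)^2 / e^2) by (field; lra).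
  apply (Rmult_lt_reg_r (e^3)); [apply pow_lt; lra |].
  replace (g * m^2 / e^2 * e^3) with (e * (m^2 * g)) by (field; lra).
  replace ((Derive phi x)^2 / e^2 * e^3) with (e * (Derive phi x)^2) by (field; lra).
  nra.
Qed.

Lemma Etilde_dominates_Ntilde (delta x : R) : 0 < delta < g / (1 + s) -> Ntilde e n x <= delta ->
  Rabs (Etilde e phi x) > sqrt g * Ntilde e n x.
Proof.
  intros Hd HN. pose proof (Etilde_sqr_gt delta x Hd HN) as Hsq.
  assert (Hsg : (sqrt g)^2 = g) by (rewrite <- Rsqr_pow2; apply Rsqr_sqrt; lra).
  assert (Hsq' : (sqrt g * Ntilde e n x)^2 < (Rabs (Etilde e phi x))^2)
    by (rewrite pow2_abs, Rpow_mult_distr, Hsg; exact Hsq).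
  destruct (Rle_lt_dec (Rabs (Etilde e phi x)) (sqrt g * Ntilde e n x)) as [Hle | Hlt]; [| lra].
  exfalso. assert (0 <= Rabs (Etilde e phi x)) by apply Rabs_pos.
  assert ((Rabs (Etilde e phi x))^2 <= (sqrt g * Ntilde e n x)^2) by (apply pow_incr; lra).
  lra.
Qed.

End SmallAmplitude.

Theorem lemma4p1 (sigma gamma : R) (Hsigma : 0 <= sigma) (Hgamma : 0 < gamma) :
  exists eps0 C delta0 : R, 0 < eps0 /\ 0 < C /\ 0 < delta0 /\
  (* part (1) *)
  (forall eps, 0 < eps < eps0 -> forall n u phi : R -> R,
     solitary_wave sigma gamma eps n u phi ->
     Ntilde eps n 0 > 2 * gamma / Vspeed sigma /\
     2 * gamma ^ 2 < Derive (Etilde eps phi) 0 < 4 * gamma ^ 2 /\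
     Rbar_lt (Finite (1/2))
       (Lub_Rbar (fun y => exists x, y = hfun sigma gamma eps (n x))) /\
     Rbar_lt (Lub_Rbar (fun y => exists x, y = hfun sigma gamma eps (n x)))
       (Finite (3/2)) /\
     (forall x, Rabs (Derive (Ntilde eps n) x) + Rabs (Etilde eps phi x)
                + Rabs (Derive_n (Etilde eps phi) 2 x) <= C)) /\
  (* part (2) *)
  (forall delta, 0 < delta < delta0 ->
   forall eps, 0 < eps < eps0 -> forall n u phi : R -> R,
     solitary_wave sigma gamma eps n u phi ->
     forall x, Ntilde eps n x <= delta ->
       Rabs (Etilde eps phi x) > sqrt gamma * Ntilde eps n x).
Proof.
  exists (eps_max sigma gamma), (Cbound sigma gamma), (gamma / (1 + sigma)).
  split; [now apply eps_max_pos |].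
  split; [now apply Cbound_pos |].
  split; [apply Rdiv_lt_0_compat; lra |].
  split.
  - intros eps [Heps Heps_lt] n u phi Hwave.
    split; [| split; [| split; [| split]]];
      [ eapply Ntilde_0_gt | eapply Derive_Etilde_0_bounds | eapply sup_h_gt | eapply sup_h_lt
      | intros x; eapply derivatives_bounded ]; eauto.
  - intros delta Hdelta eps [Heps Heps_lt] n u phi Hwave x Hx.
    eapply Etilde_dominates_Ntilde; eauto.
Qed.
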